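(* Let $\lambda\ge0$ and $J_\lambda(\theta)=\lambda\theta-(\lambda-1)\frac{1-F(\theta)}{f(\theta)}$, and assume $J_\lambda$ is nondecreasing on $\Theta$. Then for every $\theta_0\in[0,\bar\theta)$, the function $s(\theta)=F(\theta)$ on $[\theta_0,\bar\theta]$ maximizes $\int_{\theta_0}^{\bar\theta}J_\lambda(\theta)s(\theta)\,dF(\theta)$ over $s\in\mathcal S(\theta_0)$. Consequently, with the participation cutoff $\theta_0$ fixed and the cutoff type's payoff fixed (as it is under the nonnegative-price constraint), the social welfare $W_S=\int_{\theta_0}^{\bar\theta}(\lambda p(\theta)+U(\theta))\,dF(\theta)$ is maximized by full separation of participants.
   Context: Let $0<\bar\theta<\infty$, $\Theta=[0,\bar\theta]$, $F$ a cdf on $\Theta$ with continuous, strictly positive density $f$, $dF=f\,d\theta$. For $\theta_0\in[0,\bar\theta)$ and bounded measurable $a,b$ on $[\theta_0,\bar\theta]$, write $b\in\mathrm{MPS}(a)$ if $\int_x^{\bar\theta}b\,dF\le\int_x^{\bar\theta}a\,dF$ for all $x\in[\theta_0,\bar\theta]$, with equality at $x=\theta_0$. $\mathcal S(\theta_0)$ is the set of nondecreasing $s:[\theta_0,\bar\theta]\to[0,1]$ with $s\in\mathrm{MPS}(F)$. In an incentive-compatible mechanism with cutoff $\theta_0$, interim status $s$ and prices $p$, a participant's payoff is $U(\theta)=\theta s(\theta)-p(\theta)+v(\theta)$ with $v$ twice differentiable, $v'\ge0$, $v''\le0$, and $U(\theta)=U(\theta_0)+\int_{\theta_0}^\theta(s(x)+v'(x))dx$;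 then $W_S=\int_{\theta_0}^{\bar\theta}J_\lambda s\,dF+C$ where $C$ depends only on $\theta_0$, $U(\theta_0)$, $v$, $F$, $\lambda$. *)

From Stdlib Require Import Reals.
From Coquelicot Require Import Coquelicot.
Open Scope R_scope.

Definition continuous_within_interval (a b : R) (f : R -> R) (x : R) : Prop :=
  filterlim f (within (fun y => a <= y <= b) (locally x)) (locally (f x)).

Definition cdf_with_density (tbar : R) (F f : R -> R) : Prop :=
  (forall x, 0 <= x <= tbar -> continuous_within_interval 0 tbar f x) /\
  (forall x, 0 <= x <= tbar -> 0 < f x) /\
  (forall x, 0 <= x <= tbar -> F x = RInt f 0 x) /\
  F tbar = 1.

Definition int_dF (f : R -> R) (g : R -> R) (x tbar : R) : R :=
  RInt (fun t => g t * f t) x tbar.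

Definition MPS (f : R -> R) (t0 tbar : R) (a b : R -> R) : Prop :=
  (forall x, t0 <= x <= tbar -> int_dF f b x tbar <= int_dF f a x tbar) /\
  int_dF f b t0 tbar = int_dF f a t0 tbar.

Definition in_S (F f : R -> R) (t0 tbar : R) (s : R -> R) : Prop :=
  (forall x y, t0 <= x -> x <= y -> y <= tbar -> s x <= s y) /\
  (forall x, t0 <= x <= tbar -> 0 <= s x <= 1) /\
  MPS f t0 tbar F s.

Definition J (lam : R) (F f : R -> R) (t : R) : R :=
  lam * t - (lam - 1) * ((1 - F t) / f t).

(* Incentive-compatible payoff with cutoff t0, cutoff payoff U0, interim status s:
   U(t) = U0 + \int_{t0}^t (s + v'). *)
Definition payoff (dv s : R -> R) (t0 U0 : R) (t : R) : R :=
  U0 + RInt (fun x => s x + dv x) t0 t.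

(* Price implied by U(t) = t s(t) - p(t) + v(t). *)
Definition price (v dv s : R -> R) (t0 U0 : R) (t : R) : R :=
  t * s t + v t - payoff dv s t0 U0 t.

Definition welfare (lam : R) (f v dv s : R -> R) (t0 tbar U0 : R) : R :=
  int_dF f (fun t => lam * price v dv s t0 U0 t + payoff dv s t0 U0 t) t0 tbar.

From Stdlib Require Import Reals Lra Lia ZArith Classical.
From Coquelicot Require Import Coquelicot.
Open Scope R_scope.

(* With [J f = lam t f - (lam - 1) (1 - F)], for s in S(t0) the function
   g = (F - s) f has nonnegative tail integrals and total integral 0 (the MPS
   constraint), so Abel summation against the nondecreasing J gives
   [RInt (J g) >= 0]: s = F maximizes the virtual surplus.  Integrating the
   payoff U = U0 + RInt (s + v') by parts, the welfare is the virtual surplus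
   plus a quantity independent of s, so full separation maximizes it too.
   Integrability of products with monotone functions comes from uniform
   staircase approximations, and both summation-by-parts identities from the
   fact that a function whose increments are bounded by
   C (y - x) (phi y - phi x), with phi nondecreasing, cannot increase. *)

Definition nondecreasing_on (a b : R) (s : R -> R) : Prop :=
  forall x y, a <= x -> x <= y -> y <= b -> s x <= s y.

(* Coquelicot states linearity with the generic [plus] and [scal]; these
   restatements over [R] can be used for rewriting. *)
Lemma RInt_plusR (g h : R -> R) a b : ex_RInt g a b -> ex_RInt h a b ->
  RInt (fun t => g t + h t) a b = RInt g a b + RInt h a b.
Proof. intros. apply (RInt_plus g h a b); auto. Qed.

Lemma RInt_minusR (g h : R -> R) a b : ex_RInt g a b -> ex_RInt h a b ->
  RInt (fun t => g t - h t) a b = RInt g a b - RInt h a b.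
Proof. intros. apply (RInt_minus g h a b); auto. Qed.

Lemma RInt_scalR (g : R -> R) c a b : ex_RInt g a b ->
  RInt (fun t => c * g t) a b = c * RInt g a b.
Proof. intros. apply (RInt_scal g a b c); auto. Qed.

Lemma ex_RInt_plusR (g h : R -> R) a b : ex_RInt g a b -> ex_RInt h a b ->
  ex_RInt (fun t => g t + h t) a b.
Proof. intros. apply (ex_RInt_plus g h); auto. Qed.

Lemma ex_RInt_minusR (g h : R -> R) a b : ex_RInt g a b -> ex_RInt h a b ->
  ex_RInt (fun t => g t - h t) a b.
Proof. intros. apply (ex_RInt_minus g h); auto. Qed.

Lemma ex_RInt_scalR (g : R -> R) c a b : ex_RInt g a b -> ex_RInt (fun t => c * g t) a b.
Proof. intros. apply (ex_RInt_scal g a b c); auto. Qed.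

Lemma RInt_pointR (g : R -> R) a : RInt g a a = 0.
Proof. exact (RInt_point a g). Qed.

Lemma RInt_ChaslesR (g : R -> R) a b c : ex_RInt g a b -> ex_RInt g b c ->
  RInt g a b + RInt g b c = RInt g a c.
Proof. intros. apply (RInt_Chasles g a b c); auto. Qed.

Lemma RInt_ext_open (g h : R -> R) a b : a <= b -> (forall t, a < t < b -> g t = h t) ->
  RInt g a b = RInt h a b.
Proof.
  intros Hab Hgh. apply RInt_ext. intros t Ht.
  rewrite Rmin_left, Rmax_right in Ht by lra. auto.
Qed.

Lemma ex_RInt_ext_open (g h : R -> R) a b : a <= b -> (forall t, a < t < b -> g t = h t) ->
  ex_RInt g a b -> ex_RInt h a b.
Proof.
  intros Hab Hgh. apply ex_RInt_ext. intros t Ht.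
  rewrite Rmin_left, Rmax_right in Ht by lra. auto.
Qed.

Lemma ex_RInt_subinterval (g : R -> R) a b c d : a <= c -> c <= d -> d <= b ->
  ex_RInt g a b -> ex_RInt g c d.
Proof.
  intros. apply (ex_RInt_Chasles_2 g a c d); [lra|].
  apply (ex_RInt_Chasles_1 g a d b); [lra|auto].
Qed.

Lemma ex_RInt_bounded (g : R -> R) a b : a <= b -> ex_RInt g a b ->
  exists M, 0 <= M /\ forall t, a <= t <= b -> Rabs (g t) <= M.
Proof.
  intros Hab Hg. destruct (ex_RInt_ub g a b Hg) as [M HM].
  assert (Hbd : forall t, a <= t <= b -> Rabs (g t) <= M).
  { intros t Ht. apply HM. rewrite Rmin_left, Rmax_right; lra. }
  exists M. split; auto.
  specialize (Hbd a ltac:(lra)). pose proof (Rabs_pos (g a)). lra.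
Qed.

(* Summing the hypothesis over a uniform partition of mesh h = (b - a)/n
   gives K b - K a <= C h (phi b - phi a), which tends to 0. *)
Lemma endpoint_le_of_increment_bound (K phi : R -> R) a b C : a <= b -> 0 <= C ->
  nondecreasing_on a b phi ->
  (forall x y, a <= x -> x <= y -> y <= b -> K y - K x <= C * (y - x) * (phi y - phi x)) ->
  K b <= K a.
Proof.
  intros Hab HC Hphi HK.
  assert (Hmesh : forall n : nat, (1 <= n)%nat ->
            K b - K a <= C * ((b - a) / INR n) * (phi b - phi a)).
  { intros n Hn. assert (Hnp : 0 < INR n) by (apply lt_0_INR; lia).
    set (h := (b - a) / INR n).
    assert (Hh : 0 <= h) by (unfold h; apply Rdiv_le_0_compat; lra).
    assert (Hnh : INR n * h = b - a) by (unfold h; field; lra).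
    assert (Hk : forall k, (k <= n)%nat ->
              K (a + INR k * h) - K a <= C * h * (phi (a + INR k * h) - phi a)).
    { induction k as [|k IH]; intros Hkn.
      - simpl. replace (a + 0 * h) with a by ring. lra.
      - specialize (IH ltac:(lia)).
        assert (HkR : INR (S k) <= INR n) by (apply le_INR; lia).
        rewrite S_INR in *. pose proof (pos_INR k).
        pose proof (HK (a + INR k * h) (a + (INR k + 1) * h)
                      ltac:(nra) ltac:(nra) ltac:(nra)) as Hstep.
        replace (a + (INR k + 1) * h - (a + INR k * h)) with h in Hstep by ring.
        lra. }
    specialize (Hk n (Nat.le_refl n)). rewrite Hnh in Hk.
    replace (a + (b - a)) with b in Hk by ring. exact Hk. }
  destruct (Rle_or_lt (K b) (K a)) as [Hle|Hgt]; auto. exfalso.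
  set (D := C * (b - a) * (phi b - phi a)).
  assert (HD : 0 <= D).
  { assert (phi a <= phi b) by (apply Hphi; lra).
    unfold D. apply Rmult_le_pos; [apply Rmult_le_pos|]; lra. }
  destruct (archimed (D / (K b - K a))) as [Hup _].
  set (m := up (D / (K b - K a))) in *.
  assert (Hq : 0 <= D / (K b - K a)) by (apply Rdiv_le_0_compat; lra).
  assert (Hm : (0 < m)%Z) by (apply lt_IZR; lra).
  pose proof (Hmesh (Z.to_nat m) ltac:(lia)) as Hn.
  rewrite INR_IZR_INZ, Z2Nat.id in Hn by lia.
  assert (Hmp : 0 < IZR m) by (apply IZR_lt; lia).
  replace (C * ((b - a) / IZR m) * (phi b - phi a)) with (D / IZR m) in Hn
    by (unfold D; field; lra).
  apply (Rmult_lt_compat_r (K b - K a)) in Hup; [|lra].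
  replace (D / (K b - K a) * (K b - K a)) with D in Hup by (field; lra).
  apply (Rmult_le_compat_l (IZR m)) in Hn; [|lra].
  replace (IZR m * (D / IZR m)) with D in Hn by (field; lra). lra.
Qed.

(** * Products with monotone functions *)

(* An up-closed subset of [a, b] is an interval ending at b, so h is 0 and
   then g. *)
Lemma ex_RInt_up_closed_restrict (P : R -> Prop) (g h : R -> R) a b :
  a <= b -> ex_RInt g a b ->
  (forall x y, a <= x -> x <= y -> y <= b -> P x -> P y) ->
  (forall t, a <= t <= b -> (P t -> h t = g t) /\ (~ P t -> h t = 0)) ->
  ex_RInt h a b.
Proof.
  intros Hab Hg HP Hh.
  set (E := fun t => a <= t <= b /\ (t = a \/ ~ P t)).
  destruct (completeness E) as [m [Hub Hlub]].
  - exists b. intros x [Hx _]. lra.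
  - exists a. split; [lra|left; auto].
  - assert (Ham : a <= m) by (apply Hub; split; [lra|left; auto]).
    assert (Hmb : m <= b) by (apply Hlub; intros x [Hx _]; lra).
    assert (Hbelow : forall t, a < t < m -> ~ P t).
    { intros t Ht HPt. assert (m <= t); [|lra].
      apply Hlub. intros u [Hu [Hua|HnP]]; [lra|].
      destruct (Rle_or_lt u t); auto. exfalso. apply HnP. apply (HP t); auto; lra. }
    assert (Habove : forall t, m < t <= b -> P t).
    { intros t Ht. apply NNPP. intro HnP. assert (t <= m); [|lra].
      apply Hub. split; [lra|right; auto]. }
    apply (ex_RInt_Chasles h a m b).
    + apply (ex_RInt_ext_open (fun _ => 0)); [lra| |apply ex_RInt_const].
      intros t Ht. symmetry. apply (proj2 (Hh t ltac:(lra))). apply Hbelow; lra.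
    + apply (ex_RInt_ext_open g); [lra| |apply (ex_RInt_subinterval g a b); auto; lra].
      intros t Ht. symmetry. apply (proj1 (Hh t ltac:(lra))). apply Habove; lra.
Qed.

Definition step (y : R) : R := if Rlt_dec 0 y then 1 else 0.

Fixpoint staircase (y : R) (n : nat) : R :=
  match n with O => 0 | S n => step y + staircase (y - 1) n end.

Lemma staircase_nonpos n : forall y, y <= 0 -> staircase y n = 0.
Proof.
  induction n as [|n IH]; intros y Hy; simpl; auto.
  unfold step. destruct (Rlt_dec 0 y); [lra|]. rewrite IH by lra. ring.
Qed.

Lemma staircase_approx n : forall y, 0 <= y <= INR n -> Rabs (y - staircase y n) <= 1.
Proof.
  induction n as [|n IH]; intros y Hy.
  - simpl in *. replace y with 0 by lra. rewrite Rminus_0_r, Rabs_R0. lra.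
  - rewrite S_INR in Hy. simpl staircase. unfold step. destruct (Rle_or_lt y 1).
    + rewrite staircase_nonpos by lra. destruct (Rlt_dec 0 y); apply Rabs_le; lra.
    + destruct (Rlt_dec 0 y); [|lra].
      replace (y - (1 + staircase (y - 1) n)) with (y - 1 - staircase (y - 1) n) by ring.
      apply IH. lra.
Qed.

Lemma ex_RInt_staircase_mult (s g : R -> R) a b : a <= b -> ex_RInt g a b ->
  nondecreasing_on a b s ->
  forall n m c, 0 <= m -> ex_RInt (fun t => staircase (m * s t - c) n * g t) a b.
Proof.
  intros Hab Hg Hs n. induction n as [|n IH]; intros m c Hm.
  - apply (ex_RInt_ext_open (fun _ => 0)); auto; [|apply ex_RInt_const].
    intros t _. simpl. ring.
  - apply (ex_RInt_ext_open
             (fun t => step (m * s t - c) * g t + staircase (m * s t - (c + 1)) n * g t)); auto.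
    + intros t _. simpl. replace (m * s t - c - 1) with (m * s t - (c + 1)) by ring. ring.
    + apply ex_RInt_plusR; auto.
      apply (ex_RInt_up_closed_restrict (fun t => 0 < m * s t - c) g); auto.
      * intros x y Hx Hxy Hy Hpos. pose proof (Hs x y Hx Hxy Hy). nra.
      * intros t _. unfold step.
        split; intro H; destruct (Rlt_dec 0 (m * s t - c)); try tauto; ring.
Qed.

(* s is the uniform limit of staircase (n s) / n. *)
Lemma ex_RInt_unit_nondecr_mult (s g : R -> R) a b M : a <= b ->
  (forall t, 0 <= s t <= 1) -> nondecreasing_on a b s ->
  (forall t, Rabs (g t) <= M) -> ex_RInt g a b -> ex_RInt (fun t => s t * g t) a b.
Proof.
  intros Hab Hs01 Hs Hgm Hg.
  set (u := fun (n : nat) t => staircase (INR n * s t) n / INR n * g t).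
  assert (Hu : forall n, ex_RInt (u n) a b).
  { intros n.
    apply (ex_RInt_ext_open (fun t => / INR n * (staircase (INR n * s t - 0) n * g t))); auto.
    - intros t _. unfold u. rewrite Rminus_0_r. unfold Rdiv. ring.
    - apply ex_RInt_scalR, ex_RInt_staircase_mult; auto. apply pos_INR. }
  assert (HM : 0 <= M) by (specialize (Hgm 0); pose proof (Rabs_pos (g 0)); lra).
  assert (Hlim : filterlim u eventually (locally (fun t => s t * g t))).
  { apply filterlim_locally. intros eps. pose proof (cond_pos eps) as Heps.
    destruct (archimed ((M + 1) / eps)) as [Hup _].
    assert (0 <= (M + 1) / eps) by (apply Rdiv_le_0_compat; lra).
    exists (Z.to_nat (up ((M + 1) / eps))). intros n Hn t.
    assert (HnR : IZR (up ((M + 1) / eps)) <= INR n).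
    { rewrite <- (Z2Nat.id (up _)) by (apply le_IZR; lra).
      rewrite <- INR_IZR_INZ. apply le_INR; auto. }
    assert (Hnp : 0 < INR n) by lra.
    assert (Hk : M + 1 < eps * INR n).
    { apply (Rmult_lt_compat_l eps) in Hup; auto.
      replace (eps * ((M + 1) / eps)) with (M + 1) in Hup by (field; lra). nra. }
    change (Rabs (u n t - s t * g t) < eps). unfold u.
    specialize (Hs01 t). specialize (Hgm t).
    pose proof (staircase_approx n (INR n * s t) ltac:(nra)) as Hc.
    set (e := INR n * s t - staircase (INR n * s t) n) in Hc.
    replace (staircase (INR n * s t) n / INR n * g t - s t * g t)
      with (- (e * g t / INR n)) by (unfold e; field; lra).
    rewrite Rabs_Ropp. unfold Rdiv.
    rewrite Rabs_mult, Rabs_mult, Rabs_inv, (Rabs_right (INR n)) by lra.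
    assert (Rabs e * Rabs (g t) <= M).
    { pose proof (Rabs_pos (g t)). pose proof (Rabs_pos e). nra. }
    apply (Rmult_lt_reg_r (INR n)); auto. rewrite Rmult_assoc, Rinv_l by lra. lra. }
  destruct (filterlim_RInt u a b eventually eventually_filter _ (fun n => RInt (u n) a b)
              (fun n => RInt_correct _ _ _ (Hu n)) Hlim) as [I [_ HI]].
  exists I. exact HI.
Qed.

Lemma ex_RInt_nondecr_mult (s g : R -> R) a b : a <= b -> nondecreasing_on a b s ->
  ex_RInt g a b -> ex_RInt (fun t => s t * g t) a b.
Proof.
  intros Hab Hs Hg.
  destruct (ex_RInt_bounded g a b Hab Hg) as [M [_ HM]].
  set (cl := fun t => Rmax a (Rmin b t)).
  assert (Hcl : forall t, a <= cl t <= b).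
  { intros t. unfold cl. split; [apply Rmax_l|]. apply Rmax_lub; [lra|apply Rmin_l]. }
  assert (Hcl_id : forall t, a <= t <= b -> cl t = t).
  { intros t Ht. unfold cl. rewrite Rmin_right by lra. rewrite Rmax_right; lra. }
  assert (Hsab : s a <= s b) by (apply Hs; lra).
  set (k := s b - s a + 1).
  assert (Hk : 0 < k) by (unfold k; lra).
  set (s' := fun t => (s (cl t) - s a) / k).
  set (g' := fun t => g (cl t)).
  assert (Hs'g' : ex_RInt (fun t => s' t * g' t) a b).
  { apply (ex_RInt_unit_nondecr_mult s' g' a b M); auto.
    - intros t. unfold s'. specialize (Hcl t).
      assert (s a <= s (cl t)) by (apply Hs; lra).
      assert (s (cl t) <= s b) by (apply Hs; lra).
      split; [apply Rdiv_le_0_compat; lra|].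
      apply (Rmult_le_reg_r k); auto. unfold Rdiv.
      rewrite Rmult_assoc, Rinv_l by lra. unfold k. lra.
    - intros x y Hx Hxy Hy. unfold s'. rewrite !Hcl_id by lra.
      pose proof (Hs x y Hx Hxy Hy).
      apply Rmult_le_compat_r; [left; apply Rinv_0_lt_compat|]; lra.
    - intros t. apply HM, Hcl.
    - apply (ex_RInt_ext_open g); auto. intros t Ht. unfold g'. rewrite Hcl_id; lra. }
  apply (ex_RInt_ext_open (fun t => s a * g t + k * (s' t * g' t))); auto.
  - intros t Ht. unfold s', g'. rewrite Hcl_id by lra. field. lra.
  - apply ex_RInt_plusR; apply ex_RInt_scalR; auto.
Qed.

Lemma ex_RInt_nondecr (s : R -> R) a b : a <= b -> nondecreasing_on a b s -> ex_RInt s a b.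
Proof.
  intros Hab Hs. apply (ex_RInt_ext_open (fun t => s t * 1)); auto; [intros; ring|].
  apply ex_RInt_nondecr_mult; auto. apply ex_RInt_const.
Qed.

(** * Abel summation and integration by parts *)

(* Abel summation: K x := RInt (J g) x b - J x * RInt g x b satisfies
   K y - K x <= M (y - x) (J y - J x) because RInt g y b >= 0. *)
Lemma RInt_nondecr_mult_ge0 (J g : R -> R) a b : a <= b -> nondecreasing_on a b J ->
  ex_RInt g a b -> (forall x, a <= x <= b -> 0 <= RInt g x b) -> RInt g a b = 0 ->
  0 <= RInt (fun t => J t * g t) a b.
Proof.
  intros Hab HJ Hg Htail Hzero.
  destruct (ex_RInt_bounded g a b Hab Hg) as [M [HM0 HM]].
  set (Jg := fun t => J t * g t).
  assert (HJg : ex_RInt Jg a b) by (apply ex_RInt_nondecr_mult; auto).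
  set (K := fun x => RInt Jg x b - J x * RInt g x b).
  assert (HKb : K b = 0) by (unfold K; rewrite !RInt_pointR; ring).
  assert (HKa : K a = RInt Jg a b) by (unfold K; rewrite Hzero; ring).
  rewrite <- HKa, <- HKb. apply (endpoint_le_of_increment_bound K J a b M); auto.
  intros x y Hx Hxy Hy.
  assert (Hgxy : ex_RInt g x y) by (apply (ex_RInt_subinterval g a b); auto; lra).
  assert (Hgyb : ex_RInt g y b) by (apply (ex_RInt_subinterval g a b); auto; lra).
  assert (HJxy : ex_RInt Jg x y) by (apply (ex_RInt_subinterval Jg a b); auto; lra).
  assert (HJyb : ex_RInt Jg y b) by (apply (ex_RInt_subinterval Jg a b); auto; lra).
  unfold K. rewrite <- (RInt_ChaslesR Jg x y b), <- (RInt_ChaslesR g x y b) by auto.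
  assert (Hdev : RInt Jg x y - J x * RInt g x y = RInt (fun t => (J t - J x) * g t) x y).
  { rewrite <- RInt_scalR, <- RInt_minusR by (auto; apply ex_RInt_scalR; auto).
    apply RInt_ext_open; auto. intros t _. unfold Jg. ring. }
  assert (Hbound : Rabs (RInt (fun t => (J t - J x) * g t) x y) <= (y - x) * ((J y - J x) * M)).
  { apply abs_RInt_le_const; auto.
    - apply (ex_RInt_ext_open (fun t => Jg t - J x * g t)); auto.
      + intros t _. unfold Jg. ring.
      + apply ex_RInt_minusR, ex_RInt_scalR; auto.
    - intros t Ht. assert (J x <= J t) by (apply HJ; lra).
      assert (J t <= J y) by (apply HJ; lra).
      rewrite Rabs_mult, Rabs_right by lra.
      apply Rmult_le_compat; try lra; [apply Rabs_pos|apply HM; lra]. }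
  pose proof (Htail y ltac:(lra)). assert (J x <= J y) by (apply HJ; lra).
  apply Rabs_le_between in Hbound.
  assert (0 <= (J y - J x) * RInt g y b) by (apply Rmult_le_pos; lra).
  nra.
Qed.

Definition by_parts_defect (d e : R -> R) (a x : R) : R :=
  RInt (fun t => RInt d a t * e t) a x - RInt d a x * RInt e a x
  + RInt (fun t => d t * RInt e a t) a x.

Lemma by_parts_defect_increment (d e : R -> R) a b D M x y : a <= x -> x <= y -> y <= b ->
  ex_RInt d a b -> ex_RInt e a b ->
  ex_RInt (fun t => RInt d a t * e t) a b -> ex_RInt (fun t => d t * RInt e a t) a b ->
  (forall t, a <= t <= b -> Rabs (d t) <= D) -> (forall t, a <= t <= b -> Rabs (e t) <= M) ->
  Rabs (by_parts_defect d e a y - by_parts_defect d e a x) <= 2 * D * M * (y - x) * (y - x).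
Proof.
  intros Hx Hxy Hy Hd He HQe HdE HD HM.
  assert (HD0 : 0 <= D) by (pose proof (HD a ltac:(lra)); pose proof (Rabs_pos (d a)); lra).
  assert (HM0 : 0 <= M) by (pose proof (HM a ltac:(lra)); pose proof (Rabs_pos (e a)); lra).
  set (Q := fun t => RInt d a t). set (E := fun t => RInt e a t).
  set (Qe := fun t => Q t * e t). set (dE := fun t => d t * E t).
  assert (Hsub : forall h, ex_RInt h a b -> forall u w, a <= u -> u <= w -> w <= b -> ex_RInt h u w)
    by (intros; apply (ex_RInt_subinterval h a b); auto).
  assert (HQ : forall t, a <= t <= y -> Q y = Q t + RInt d t y).
  { intros t Ht. unfold Q. rewrite RInt_ChaslesR; auto; apply Hsub; auto; lra. }
  assert (HE : forall t, x <= t <= y -> E t = E x + RInt e x t).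
  { intros t Ht. unfold E. rewrite RInt_ChaslesR; auto; apply Hsub; auto; lra. }
  assert (Hexy : ex_RInt e x y) by (apply Hsub; auto; lra).
  assert (Hdxy : ex_RInt d x y) by (apply Hsub; auto; lra).
  assert (HQexy : ex_RInt Qe x y) by (apply Hsub; auto; lra).
  assert (HdExy : ex_RInt dE x y) by (apply Hsub; auto; lra).
  set (L := fun x => RInt Qe a x - Q x * E x + RInt dE a x).
  change (Rabs (L y - L x) <= 2 * D * M * (y - x) * (y - x)).
  assert (Hdev1 : RInt Qe x y - Q y * RInt e x y = RInt (fun t => (Q t - Q y) * e t) x y).
  { rewrite <- RInt_scalR, <- RInt_minusR by (auto; apply ex_RInt_scalR; auto).
    apply RInt_ext_open; auto. intros t _. unfold Qe. ring. }
  assert (Hdev2 : RInt dE x y - E x * RInt d x y = RInt (fun t => (E t - E x) * d t) x y).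
  { rewrite <- RInt_scalR, <- RInt_minusR by (auto; apply ex_RInt_scalR; auto).
    apply RInt_ext_open; auto. intros t _. unfold dE. ring. }
  assert (Hincr : L y - L x
                  = RInt (fun t => (Q t - Q y) * e t) x y + RInt (fun t => (E t - E x) * d t) x y).
  { rewrite <- Hdev1, <- Hdev2. unfold L.
    rewrite <- (RInt_ChaslesR Qe a x y), <- (RInt_ChaslesR dE a x y) by (auto; apply Hsub; auto; lra).
    rewrite (HQ x), (HE y) by lra. ring. }
  assert (Hbound1 : Rabs (RInt (fun t => (Q t - Q y) * e t) x y) <= (y - x) * ((y - x) * D * M)).
  { apply abs_RInt_le_const; auto.
    - apply (ex_RInt_ext_open (fun t => Qe t - Q y * e t)); auto; [intros; unfold Qe; ring|].
      apply ex_RInt_minusR, ex_RInt_scalR; auto.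
    - intros t Ht. rewrite Rabs_mult, (HQ t) by lra.
      replace (Q t - (Q t + RInt d t y)) with (- RInt d t y) by ring. rewrite Rabs_Ropp.
      assert (Rabs (RInt d t y) <= (y - t) * D).
      { apply abs_RInt_le_const; [lra|apply Hsub; auto; lra|intros; apply HD; lra]. }
      apply Rmult_le_compat; try apply Rabs_pos; [nra|apply HM; lra]. }
  assert (Hbound2 : Rabs (RInt (fun t => (E t - E x) * d t) x y) <= (y - x) * ((y - x) * M * D)).
  { apply abs_RInt_le_const; auto.
    - apply (ex_RInt_ext_open (fun t => dE t - E x * d t)); auto; [intros; unfold dE; ring|].
      apply ex_RInt_minusR, ex_RInt_scalR; auto.
    - intros t Ht. rewrite Rabs_mult, (HE t) by lra.
      assert (Hshift : E x + RInt e x t - E x = RInt e x t) by ring. rewrite Hshift.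
      assert (Rabs (RInt e x t) <= (t - x) * M).
      { apply abs_RInt_le_const; [lra|apply Hsub; auto; lra|intros; apply HM; lra]. }
      apply Rmult_le_compat; try apply Rabs_pos; [nra|apply HD; lra]. }
  rewrite Hincr. eapply Rle_trans; [apply Rabs_triang|]. lra.
Qed.

(* The defect has quadratically small increments, hence is constant. *)
Lemma RInt_primitive_by_parts (d e : R -> R) a b : a <= b ->
  ex_RInt d a b -> ex_RInt e a b ->
  ex_RInt (fun t => RInt d a t * e t) a b -> ex_RInt (fun t => d t * RInt e a t) a b ->
  RInt (fun t => RInt d a t * e t) a b
  = RInt d a b * RInt e a b - RInt (fun t => d t * RInt e a t) a b.
Proof.
  intros Hab Hd He HQe HdE.
  destruct (ex_RInt_bounded d a b Hab Hd) as [D [HD0 HD]].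
  destruct (ex_RInt_bounded e a b Hab He) as [M [HM0 HM]].
  set (L := by_parts_defect d e a).
  assert (Hincr : forall x y, a <= x -> x <= y -> y <= b -> Rabs (L y - L x) <= 2 * D * M * (y - x) * (y - x))
    by (intros; apply (by_parts_defect_increment d e a b D M); auto).
  assert (HC : 0 <= 2 * D * M) by nra.
  assert (Hid : nondecreasing_on a b (fun x => x)) by (intros x y _ Hxy _; exact Hxy).
  assert (Hle : L b <= L a).
  { apply (endpoint_le_of_increment_bound L (fun x => x) a b (2 * D * M)); auto.
    intros x y Hx Hxy Hy. specialize (Hincr x y Hx Hxy Hy).
    apply Rabs_le_between in Hincr. lra. }
  assert (Hge : - L b <= - L a).
  { apply (endpoint_le_of_increment_bound (fun x => - L x) (fun x => x) a b (2 * D * M)); auto.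
    intros x y Hx Hxy Hy. specialize (Hincr x y Hx Hxy Hy).
    apply Rabs_le_between in Hincr. lra. }
  assert (HLa : L a = 0) by (unfold L, by_parts_defect; rewrite !RInt_pointR; ring).
  unfold L, by_parts_defect in Hle, Hge, HLa. lra.
Qed.

(** * Derivatives, continuity and the type distribution *)

Lemma nondecreasing_of_derive_nonneg (v dv : R -> R) a b :
  (forall x, a <= x <= b -> is_derive v x (dv x)) -> (forall x, a <= x <= b -> 0 <= dv x) ->
  nondecreasing_on a b v.
Proof.
  intros Hd Hpos x y Hx Hxy Hy.
  destruct (Req_dec x y) as [<-|Hne]; [lra|].
  destruct (MVT_gen v x y dv) as [c [Hc Hmvt]].
  - intros z Hz. rewrite Rmin_left, Rmax_right in Hz by lra. apply Hd; lra.
  - intros z Hz. rewrite Rmin_left, Rmax_right in Hz by lra.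
    apply continuity_pt_filterlim, (@ex_derive_continuous R_AbsRing R_NormedModule).
    exists (dv z). apply Hd; lra.
  - rewrite Rmin_left, Rmax_right in Hc by lra.
    assert (0 <= dv c) by (apply Hpos; lra). nra.
Qed.

Lemma ex_RInt_derivable (v dv : R -> R) a b : a <= b ->
  (forall x, a <= x <= b -> is_derive v x (dv x)) -> ex_RInt v a b.
Proof.
  intros Hab Hd. apply (@ex_RInt_continuous R_CompleteNormedModule).
  intros z Hz. rewrite Rmin_left, Rmax_right in Hz by lra.
  apply (@ex_derive_continuous R_AbsRing R_NormedModule). exists (dv z). auto.
Qed.

Lemma continuous_clamp (g : R -> R) lo hi z : lo <= z <= hi ->
  continuous_within_interval lo hi g z -> continuous (fun t => g (Rmax lo (Rmin hi t))) z.
Proof.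
  intros Hz Hc. unfold continuous_within_interval in Hc.
  assert (Hcz : Rmax lo (Rmin hi z) = z).
  { rewrite Rmin_right by lra. rewrite Rmax_right; lra. }
  unfold continuous. rewrite Hcz.
  apply filterlim_locally. intros eps.
  apply filterlim_locally with (eps := eps) in Hc. destruct Hc as [del Hdel].
  exists del. intros y Hy. apply Hdel.
  - change (Rabs (Rmax lo (Rmin hi y) - z) < del). change (Rabs (y - z) < del) in Hy.
    apply Rabs_def2 in Hy. pose proof (cond_pos del).
    apply Rabs_def1; unfold Rmax, Rmin; repeat destruct Rle_dec; lra.
  - pose proof (cond_pos del). unfold Rmax, Rmin; repeat destruct Rle_dec; lra.
Qed.

Section Cdf.

Variables (tbar : R) (F f : R -> R).
Hypothesis Htbar : 0 < tbar.
Hypothesis HF : cdf_with_density tbar F f.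

Lemma ex_RInt_density : ex_RInt f 0 tbar.
Proof.
  destruct HF as [Hc _].
  apply (ex_RInt_ext_open (fun t => f (Rmax 0 (Rmin tbar t)))); [lra| |].
  - intros t Ht. rewrite Rmin_right by lra. rewrite Rmax_right; lra.
  - apply (@ex_RInt_continuous R_CompleteNormedModule). intros z Hz.
    rewrite Rmin_left, Rmax_right in Hz by lra. apply continuous_clamp; auto.
Qed.

Lemma cdf_increment x y : 0 <= x -> x <= y -> y <= tbar -> F y - F x = RInt f x y.
Proof.
  intros Hx Hxy Hy. pose proof ex_RInt_density as Hf.
  destruct HF as [_ [_ [HFint _]]]. rewrite !HFint by lra.
  rewrite <- (RInt_ChaslesR f 0 x y); [ring| |];
    apply (ex_RInt_subinterval f 0 tbar); auto; lra.
Qed.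

Lemma cdf_nondecreasing : nondecreasing_on 0 tbar F.
Proof.
  intros x y Hx Hxy Hy. pose proof (cdf_increment x y Hx Hxy Hy).
  enough (0 <= RInt f x y) by lra.
  apply RInt_ge_0; auto.
  - apply (ex_RInt_subinterval f 0 tbar); auto using ex_RInt_density; lra.
  - intros t Ht. destruct HF as [_ [Hpos _]]. left. apply Hpos. lra.
Qed.

Lemma cdf_bounds x : 0 <= x <= tbar -> 0 <= F x <= 1.
Proof.
  intros Hx. destruct HF as [_ [_ [HFint HF1]]].
  assert (F 0 = 0) by (rewrite HFint by lra; apply RInt_pointR).
  pose proof (cdf_nondecreasing 0 x). pose proof (cdf_nondecreasing x tbar). lra.
Qed.

End Cdf.

(** * Virtual surplus and welfare *)

(* [J lam F f t * f t], with the division by the density cleared. *)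
Definition virtual_density (lam : R) (F f : R -> R) (t : R) : R :=
  lam * (t * f t) - (lam - 1) * (1 - F t).

Section Mechanism.

Variables (tbar lam : R) (F f : R -> R) (t0 : R).
Hypothesis Htbar : 0 < tbar.
Hypothesis HF : cdf_with_density tbar F f.
Hypothesis Ht0 : 0 <= t0 < tbar.

Let Jd := virtual_density lam F f.

Lemma cdf_nondecreasing_tail : nondecreasing_on t0 tbar F.
Proof. intros x y Hx Hxy Hy. apply (cdf_nondecreasing tbar F f); auto; lra. Qed.

Lemma cdf_bounds_tail x : t0 <= x <= tbar -> 0 <= F x <= 1.
Proof. intros Hx. apply (cdf_bounds tbar F f); auto; lra. Qed.

Lemma ex_RInt_density_tail : ex_RInt f t0 tbar.
Proof. apply (ex_RInt_subinterval f 0 tbar); [lra|lra|lra|]. apply (ex_RInt_density tbar F); auto. Qed.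

Lemma F_in_S : in_S F f t0 tbar F.
Proof.
  split; [exact cdf_nondecreasing_tail|split; [exact cdf_bounds_tail|]].
  split; [intros; lra|reflexivity].
Qed.

Lemma ex_RInt_nondecr_mult_density (s : R -> R) :
  nondecreasing_on t0 tbar s -> ex_RInt (fun t => s t * f t) t0 tbar.
Proof. intros Hs. apply ex_RInt_nondecr_mult; auto using ex_RInt_density_tail; lra. Qed.

Lemma ex_RInt_virtual_density_mult (s : R -> R) :
  nondecreasing_on t0 tbar s -> ex_RInt (fun t => s t * Jd t) t0 tbar.
Proof.
  intros Hs. assert (Hab : t0 <= tbar) by lra.
  assert (Hid : nondecreasing_on t0 tbar (fun t => t)) by (intros x y _ Hxy _; exact Hxy).
  apply ex_RInt_nondecr_mult; auto. unfold Jd, virtual_density.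
  apply ex_RInt_minusR; apply ex_RInt_scalR.
  - apply ex_RInt_nondecr_mult; auto using ex_RInt_density_tail.
  - apply ex_RInt_minusR; [apply ex_RInt_const|].
    apply ex_RInt_nondecr; auto using cdf_nondecreasing_tail.
Qed.

Lemma int_dF_J_mult (s : R -> R) :
  int_dF f (fun t => J lam F f t * s t) t0 tbar = RInt (fun t => s t * Jd t) t0 tbar.
Proof.
  apply RInt_ext_open; [lra|]. intros t Ht.
  destruct HF as [_ [Hpos _]]. pose proof (Hpos t ltac:(lra)).
  unfold J, Jd, virtual_density. field. lra.
Qed.

Lemma virtual_surplus_le_cdf (s : R -> R) :
  nondecreasing_on 0 tbar (J lam F f) -> in_S F f t0 tbar s ->
  RInt (fun t => s t * Jd t) t0 tbar <= RInt (fun t => F t * Jd t) t0 tbar.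
Proof.
  intros HJ [Hs [Hs01 [Htail Htot]]].
  assert (HFf := ex_RInt_nondecr_mult_density F cdf_nondecreasing_tail).
  assert (Hsf := ex_RInt_nondecr_mult_density s Hs).
  set (g := fun t => F t * f t - s t * f t).
  assert (Hg : ex_RInt g t0 tbar) by (apply ex_RInt_minusR; auto).
  assert (Hgtail : forall x, t0 <= x <= tbar -> RInt g x tbar = int_dF f F x tbar - int_dF f s x tbar).
  { intros x Hx. apply RInt_minusR; apply (ex_RInt_subinterval _ t0 tbar); auto; lra. }
  assert (Hpos : 0 <= RInt (fun t => J lam F f t * g t) t0 tbar).
  { apply RInt_nondecr_mult_ge0; auto.
    - lra.
    - intros x y Hx Hxy Hy. apply HJ; lra.
    - intros x Hx. rewrite Hgtail by lra. specialize (Htail x Hx). lra.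
    - rewrite Hgtail by lra. lra. }
  assert (Hdiff : RInt (fun t => J lam F f t * g t) t0 tbar
                  = RInt (fun t => F t * Jd t) t0 tbar - RInt (fun t => s t * Jd t) t0 tbar).
  { rewrite <- RInt_minusR
      by (apply ex_RInt_virtual_density_mult; auto using cdf_nondecreasing_tail).
    apply RInt_ext_open; [lra|]. intros t Ht.
    destruct HF as [_ [Hf _]]. pose proof (Hf t ltac:(lra)).
    unfold g, J, Jd, virtual_density. field. lra. }
  lra.
Qed.

Lemma ex_RInt_mult_survival (g : R -> R) :
  ex_RInt g t0 tbar -> ex_RInt (fun t => g t * (1 - F t)) t0 tbar.
Proof.
  intros Hg. apply (ex_RInt_ext_open (fun t => g t - F t * g t)); [lra|intros; ring|].
  apply ex_RInt_minusR; auto. apply ex_RInt_nondecr_mult; auto using cdf_nondecreasing_tail; lra.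
Qed.

Lemma payoff_nondecreasing (dv s : R -> R) U0 :
  ex_RInt (fun t => s t + dv t) t0 tbar -> (forall x, t0 <= x <= tbar -> 0 <= s x + dv x) ->
  nondecreasing_on t0 tbar (payoff dv s t0 U0).
Proof.
  intros Hd Hpos x y Hx Hxy Hy. unfold payoff.
  rewrite <- (RInt_ChaslesR _ t0 x y) by (apply (ex_RInt_subinterval _ t0 tbar); auto; lra).
  enough (0 <= RInt (fun t => s t + dv t) x y) by lra.
  apply RInt_ge_0; auto.
  - apply (ex_RInt_subinterval _ t0 tbar); auto; lra.
  - intros t Ht. apply Hpos. lra.
Qed.

(* Integration by parts against [RInt f t0 t = F t - F t0]. *)
Lemma RInt_payoff_density (dv s : R -> R) U0 :
  ex_RInt (fun t => s t + dv t) t0 tbar -> (forall x, t0 <= x <= tbar -> 0 <= s x + dv x) ->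
  RInt (fun t => payoff dv s t0 U0 t * f t) t0 tbar
  = U0 * (1 - F t0) + RInt (fun t => (s t + dv t) * (1 - F t)) t0 tbar :> R.
Proof.
  intros Hd Hpos. assert (Hab : t0 <= tbar) by lra.
  set (d := fun t => s t + dv t). set (Q := fun t => RInt d t0 t : R).
  assert (Hf := ex_RInt_density_tail).
  assert (HF1 : RInt f t0 tbar = 1 - F t0).
  { rewrite <- (cdf_increment tbar F f) by (auto; lra). destruct HF as [_ [_ [_ ->]]]. reflexivity. }
  assert (HFt : forall t, t0 <= t <= tbar -> RInt f t0 t = F t - F t0)
    by (intros; symmetry; apply (cdf_increment tbar F f); auto; lra).
  assert (HQf : ex_RInt (fun t => Q t * f t) t0 tbar).
  { apply (ex_RInt_nondecr_mult_density Q). intros x y Hx Hxy Hy.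
    pose proof (payoff_nondecreasing dv s 0 Hd Hpos x y Hx Hxy Hy). unfold payoff, Q, d in *. lra. }
  assert (HdF : ex_RInt (fun t => d t * (F t - F t0)) t0 tbar).
  { apply (ex_RInt_ext_open (fun t => (F t - F t0) * d t)); [lra|intros; ring|].
    apply ex_RInt_nondecr_mult; auto.
    intros x y Hx Hxy Hy. pose proof (cdf_nondecreasing_tail x y Hx Hxy Hy). lra. }
  assert (HdE : ex_RInt (fun t => d t * RInt f t0 t) t0 tbar).
  { apply (ex_RInt_ext_open (fun t => d t * (F t - F t0))); auto.
    intros t Ht. rewrite HFt by lra. reflexivity. }
  assert (Hparts := RInt_primitive_by_parts d f t0 tbar Hab Hd Hf HQf HdE).
  rewrite (RInt_ext_open (fun t => d t * RInt f t0 t) (fun t => d t * (F t - F t0))) in Hparts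
    by (auto; intros; rewrite HFt by lra; reflexivity).
  rewrite (RInt_ext_open _ (fun t => U0 * f t + RInt d t0 t * f t))
    by (auto; intros; apply Rmult_plus_distr_r).
  rewrite (RInt_ext_open (fun t => d t * (1 - F t))
             (fun t => (1 - F t0) * d t - d t * (F t - F t0))) by (auto; intros; ring).
  rewrite RInt_plusR, RInt_scalR, RInt_minusR, RInt_scalR, Hparts, HF1
    by (auto; apply ex_RInt_scalR; auto).
  ring.
Qed.

Lemma welfare_eq (v dv s : R -> R) U0 :
  nondecreasing_on t0 tbar v -> ex_RInt dv t0 tbar -> (forall x, t0 <= x <= tbar -> 0 <= dv x) ->
  nondecreasing_on t0 tbar s -> (forall x, t0 <= x <= tbar -> 0 <= s x) ->
  welfare lam f v dv s t0 tbar U0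
  = RInt (fun t => s t * Jd t) t0 tbar
    + (lam * RInt (fun t => v t * f t) t0 tbar
       + (1 - lam) * (U0 * (1 - F t0) + RInt (fun t => dv t * (1 - F t)) t0 tbar)).
Proof.
  intros Hv Hdv Hdv0 Hs Hs0. assert (Hab : t0 <= tbar) by lra.
  assert (Hid : nondecreasing_on t0 tbar (fun t => t)) by (intros x y _ Hxy _; exact Hxy).
  assert (Hsint := ex_RInt_nondecr s t0 tbar Hab Hs).
  assert (Hd : ex_RInt (fun t => s t + dv t) t0 tbar) by (apply ex_RInt_plusR; auto).
  assert (Hpos : forall x, t0 <= x <= tbar -> 0 <= s x + dv x)
    by (intros x Hx; specialize (Hs0 x Hx); specialize (Hdv0 x Hx); lra).
  assert (Hstf : ex_RInt (fun t => s t * (t * f t)) t0 tbar)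
    by (apply ex_RInt_nondecr_mult, ex_RInt_nondecr_mult_density; auto).
  assert (Hvf := ex_RInt_nondecr_mult_density v Hv).
  assert (HUf := ex_RInt_nondecr_mult_density _ (payoff_nondecreasing dv s U0 Hd Hpos)).
  assert (HsS := ex_RInt_mult_survival s Hsint).
  assert (HdvS := ex_RInt_mult_survival dv Hdv).
  unfold welfare, int_dF.
  rewrite (RInt_ext_open _ (fun t => lam * (s t * (t * f t))
                                    + (lam * (v t * f t) + (1 - lam) * (payoff dv s t0 U0 t * f t))))
    by (auto; intros; unfold price; ring).
  assert (HsJ : ex_RInt (fun t => lam * (s t * (t * f t))) t0 tbar) by (apply ex_RInt_scalR; auto).
  assert (HvJ : ex_RInt (fun t => lam * (v t * f t)) t0 tbar) by (apply ex_RInt_scalR; auto).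
  assert (HUJ : ex_RInt (fun t => (1 - lam) * (payoff dv s t0 U0 t * f t)) t0 tbar)
    by (apply ex_RInt_scalR; auto).
  assert (HvUJ : ex_RInt (fun t => lam * (v t * f t) + (1 - lam) * (payoff dv s t0 U0 t * f t))
                   t0 tbar) by (apply ex_RInt_plusR; assumption).
  rewrite (RInt_plusR (fun t => lam * (s t * (t * f t)))), (RInt_plusR (fun t => lam * (v t * f t)))
    by assumption.
  rewrite (RInt_scalR (fun t => s t * (t * f t))), (RInt_scalR (fun t => v t * f t)),
    (RInt_scalR (fun t => payoff dv s t0 U0 t * f t)), RInt_payoff_density by assumption.
  rewrite (RInt_ext_open (fun t => s t * Jd t)
             (fun t => lam * (s t * (t * f t)) - (lam - 1) * (s t * (1 - F t))))
    by (auto; intros; unfold Jd, virtual_density; ring).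
  rewrite (RInt_ext_open (fun t => (s t + dv t) * (1 - F t))
             (fun t => s t * (1 - F t) + dv t * (1 - F t))) by (auto; intros; ring).
  rewrite (RInt_minusR (fun t => lam * (s t * (t * f t)))) by (apply ex_RInt_scalR; assumption).
  rewrite (RInt_plusR (fun t => s t * (1 - F t))), (RInt_scalR (fun t => s t * (t * f t))),
    (RInt_scalR (fun t => s t * (1 - F t))) by assumption.
  ring.
Qed.

Lemma welfare_le_cdf (v dv s : R -> R) U0 :
  nondecreasing_on 0 tbar (J lam F f) ->
  nondecreasing_on t0 tbar v -> ex_RInt dv t0 tbar -> (forall x, t0 <= x <= tbar -> 0 <= dv x) ->
  in_S F f t0 tbar s ->
  welfare lam f v dv s t0 tbar U0 <= welfare lam f v dv F t0 tbar U0.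
Proof.
  intros HJ Hv Hdv Hdv0 Hs. pose proof Hs as [Hsmono [Hs01 _]].
  assert (Hs0 : forall x, t0 <= x <= tbar -> 0 <= s x) by (intros x Hx; apply Hs01, Hx).
  assert (HF0 : forall x, t0 <= x <= tbar -> 0 <= F x) by (intros x Hx; apply cdf_bounds_tail, Hx).
  rewrite (welfare_eq v dv s U0), (welfare_eq v dv F U0)
    by (assumption || exact cdf_nondecreasing_tail).
  apply Rplus_le_compat_r, virtual_surplus_le_cdf; assumption.
Qed.

End Mechanism.

Theorem proposition5 (tbar lam : R) (F f : R -> R)
  (Htbar : 0 < tbar)
  (HF : cdf_with_density tbar F f)
  (Hlam : 0 <= lam)
  (HJ : forall x y, 0 <= x -> x <= y -> y <= tbar -> J lam F f x <= J lam F f y) :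
  forall t0, 0 <= t0 < tbar ->
    (in_S F f t0 tbar F /\
     (forall s, in_S F f t0 tbar s ->
        int_dF f (fun t => J lam F f t * s t) t0 tbar
        <= int_dF f (fun t => J lam F f t * F t) t0 tbar)) /\
    (forall (v dv d2v : R -> R) (U0 : R),
       (forall x, 0 <= x <= tbar -> is_derive v x (dv x)) ->
       (forall x, 0 <= x <= tbar -> is_derive dv x (d2v x)) ->
       (forall x, 0 <= x <= tbar -> 0 <= dv x) ->
       (forall x, 0 <= x <= tbar -> d2v x <= 0) ->
       forall s, in_S F f t0 tbar s ->
         welfare lam f v dv s t0 tbar U0 <= welfare lam f v dv F t0 tbar U0).
Proof.
  intros t0 Ht0.
  split; [split|].
  - exact (F_in_S tbar F f t0 Htbar HF Ht0).
  - intros s Hs. rewrite !(int_dF_J_mult tbar lam F f t0 HF Ht0).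
    apply virtual_surplus_le_cdf; auto.
  -
    intros v dv d2v U0 Hv Hdv Hdv0 _ s Hs.
    apply (welfare_le_cdf tbar lam F f t0); auto.
    + apply (nondecreasing_of_derive_nonneg v dv); intros x Hx; [apply Hv|apply Hdv0]; lra.
    + apply (ex_RInt_derivable dv d2v); [lra|]. intros x Hx. apply Hdv. lra.
    + intros x Hx. apply Hdv0. lra.
Qed.
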